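(* Assume $\mathcal N''(s)\le0$ for $s\in[0,1]$. Let $0\le c<1$ and $\Lambda\in\mathbb C$ with $\operatorname{Re}\Lambda>0$. Let $r_0$ solve $r_0'=r_0\mathcal N(r_0^2)$, $r_0(0)=\frac12$, and set $\mathcal N_0=\mathcal N(r_0^2)$, $\mathcal N_p=\mathcal N'(r_0^2)r_0^2$, $F=\mathcal N_0+\mathcal N_p$ and $f=2c\mathcal N_p$ (functions of $X\in\mathbb R$). If $V\in L^2(\mathbb R)$ satisfies $$V_{XX}=(F^2-F_X)V+\Lambda(\Lambda-f)V,$$ then $V\equiv0$.
   Context: Nonlinearity: $\mathcal N:[0,\infty)\to\mathbb R$ is smooth, $\mathcal N'(s)<0$ for $s>0$, $\mathcal N(0)=1$, $\mathcal N(1)=0$, $\lim_{s\to\infty}\mathcal N(s)\in[-\infty,0)$. The function $r_0$ increases from $0$ at $X=-\infty$ to $1$ at $X=+\infty$. *)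

From Stdlib Require Import Reals.
From Coquelicot Require Import Coquelicot.
Open Scope R_scope.

(* Smoothness on [0,oo) is
   rendered as smoothness on all of R (any smooth function on [0,oo)
   extends smoothly to R, and values on (-oo,0) are never used). *)
Definition admissible_nonlinearity (N : R -> R) : Prop :=
  (forall (n : nat) (s : R), ex_derive_n N n s) /\
  (forall s : R, 0 < s -> Derive N s < 0) /\
  N 0 = 1 /\ N 1 = 0 /\
  (exists l : Rbar, is_lim N p_infty l /\ Rbar_lt l 0).

Definition N0 (N r0 : R -> R) (X : R) : R := N (r0 X ^ 2).
Definition Np (N r0 : R -> R) (X : R) : R := Derive N (r0 X ^ 2) * r0 X ^ 2.
Definition Ffun (N r0 : R -> R) (X : R) : R := N0 N r0 X + Np N r0 X.
Definition ffun (N r0 : R -> R) (c X : R) : R := 2 * c * Np N r0 X.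

Definition L2R (V : R -> C) : Prop :=
  ex_RInt_gen (fun X => (Cmod (V X)) ^ 2)
    (Rbar_locally m_infty) (Rbar_locally p_infty).

From Pilot Require Import Defs.
From Stdlib Require Import Reals Lra Psatz.
From Coquelicot Require Import Coquelicot.
Open Scope R_scope.

(* With W = V' + F V the equation becomes V' = W - F V, W' = F W + Lam (Lam - f) V.
   Since F is real, the flux h = Re (conj (Lam V) W) satisfies
   h' = Re Lam |W|^2 + |Lam|^2 (Re Lam - f) |V|^2 >= 0, using f <= 0 (from c >= 0 and
   N' < 0), and Cauchy-Schwarz gives Re Lam h^2 <= |Lam|^2 |V|^2 h'.  Hence h is
   nondecreasing and, wherever h <> 0, (int_0^X |V|^2 - 1/h)' >= min(1, Re Lam / |Lam|^2).
   On a half-line where h keeps its sign this linear growth contradicts the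
   integrability of |V|^2, so h = 0, hence h' = 0 and V = 0. *)

Lemma is_derive_Re (V : R -> C) (x : R) (l : C) :
  is_derive V x l -> is_derive (fun t => Re (V t)) x (Re l).
Proof.
intros H.
exact (filterdiff_comp' V Re x _ _ H (filterdiff_linear _ is_linear_fst)).
Qed.

Lemma is_derive_Im (V : R -> C) (x : R) (l : C) :
  is_derive V x l -> is_derive (fun t => Im (V t)) x (Im l).
Proof.
intros H.
exact (filterdiff_comp' V Im x _ _ H (filterdiff_linear _ is_linear_snd)).
Qed.

Lemma is_derive_reflect (f : R -> R) (x l : R) :
  is_derive f (- x) l -> is_derive (fun t => - f (- t)) x l.
Proof.
intros H.
assert (E : Derive f (- x) = l) by now apply is_derive_unique.
auto_derive; [now exists l|].
change (- (- (1) * Derive f (- x)) = l); rewrite E; ring.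
Qed.

Lemma is_derive_ge_growth (g dg : R -> R) (m a b : R) : a <= b ->
  (forall x, a <= x <= b -> is_derive g x (dg x)) ->
  (forall x, a <= x <= b -> m <= dg x) -> m * (b - a) <= g b - g a.
Proof.
intros Hab Hd Hm.
destruct (MVT_gen g a b dg) as [c [Hc E]];
  rewrite ?Rmin_left, ?Rmax_right in * by lra.
- intros x Hx; apply Hd; lra.
- intros x Hx; apply continuity_pt_filterlim, (ex_derive_continuous g).
  eexists; apply Hd; lra.
- rewrite E; specialize (Hm c Hc); nra.
Qed.

Lemma RInt_bounded_of_ex_RInt_gen (g : R -> R) :
  (forall x, 0 <= g x) -> (forall a b, ex_RInt g a b) ->
  ex_RInt_gen g (Rbar_locally m_infty) (Rbar_locally p_infty) ->
  exists S, forall a b, a <= b -> RInt g a b <= S.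
Proof.
intros Hg Hex [l Hl].
destruct (Hl (ball l 1) (locally_ball l (mkposreal 1 Rlt_0_1)))
  as [P Q [M1 HM1] [M2 HM2] HPQ].
exists (l + 1); intros a b Hab.
set (u := Rmin a M1 - 1); set (v := Rmax b M2 + 1).
assert (Hua : u <= a) by (unfold u; pose proof (Rmin_l a M1); lra).
assert (Hbv : b <= v) by (unfold v; pose proof (Rmax_l b M2); lra).
destruct (HPQ u v) as [y [Hy Hball]].
{ apply HM1; unfold u; pose proof (Rmin_r a M1); simpl; lra. }
{ apply HM2; unfold v; pose proof (Rmax_r b M2); simpl; lra. }
apply (is_RInt_unique g u v) in Hy.
assert (Hwider : RInt g a b <= RInt g u v).
{ rewrite <- (RInt_Chasles g u a v), <- (RInt_Chasles g a b v) by apply Hex.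
  unfold plus; simpl.
  assert (0 <= RInt g u a) by (apply RInt_ge_0; auto).
  assert (0 <= RInt g b v) by (apply RInt_ge_0; auto).
  lra. }
apply Rabs_def2 in Hball; unfold minus, plus, opp in Hball; simpl in Hball.
lra.
Qed.

Lemma Rmin_le_add_div_sqr (k g d x : R) :
  0 < k -> 0 <= g -> 0 <= d -> x <> 0 -> k * x ^ 2 <= g * d ->
  Rmin 1 k <= g + d / x ^ 2.
Proof.
intros Hk Hg Hd Hx Hkx.
assert (Hx2 : 0 < x ^ 2) by (apply pow2_gt_0; exact Hx).
destruct (Rle_lt_dec 1 g).
- assert (0 <= d / x ^ 2) by (apply Rdiv_le_0_compat; lra).
  pose proof (Rmin_l 1 k); lra.
- assert (k <= d / x ^ 2).
  { apply (Rmult_le_reg_r (x ^ 2)); [exact Hx2|].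
    unfold Rdiv; rewrite Rmult_assoc, Rinv_l by lra; nra. }
  pose proof (Rmin_r 1 k); lra.
Qed.

Lemma riccati_supersolution_nonpos (h dh Q g : R -> R) (k S : R) :
  0 < k ->
  (forall t, is_derive h t (dh t)) -> (forall t, 0 <= dh t) ->
  (forall t, is_derive Q t (g t)) -> (forall t, 0 <= g t) ->
  (forall a b, a <= b -> Q b - Q a <= S) ->
  (forall t, k * h t ^ 2 <= g t * dh t) ->
  forall a, h a <= 0.
Proof.
intros Hk Hh Hdh HQ Hg HQS Hric a.
apply Rnot_lt_le; intros Ha.
set (m := Rmin 1 k).
assert (Hm : 0 < m) by (apply Rmin_pos; lra).
assert (Hrate : forall t, h t <> 0 -> m <= g t + dh t / h t ^ 2)
  by (intros t Ht; apply Rmin_le_add_div_sqr; auto).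
assert (Hpos : forall t, a <= t -> 0 < h t).
{ intros t Ht.
  pose proof (is_derive_ge_growth h dh 0 a t Ht (fun x _ => Hh x) (fun x _ => Hdh x)).
  lra. }
set (G := fun t => Q t - / h t).
assert (HG : forall t, a <= t -> is_derive G t (g t + dh t / h t ^ 2)).
{ intros t Ht.
  assert (Ht0 : h t <> 0) by (apply Rgt_not_eq, Hpos, Ht).
  replace (g t + dh t / h t ^ 2) with (minus (g t) (- dh t / h t ^ 2))
    by (unfold minus, plus, opp; simpl; field; exact Ht0).
  apply (is_derive_minus Q (fun t => / h t)); [apply HQ|].
  apply is_derive_inv; [apply Hh | exact Ht0]. }
assert (HS : 0 <= S) by (specialize (HQS a a (Rle_refl a)); lra).
set (b := a + (S + / h a) / m + 1).
assert (Hb : a <= b).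
{ assert (0 < / h a) by (apply Rinv_0_lt_compat, Ha).
  assert (0 <= (S + / h a) / m) by (apply Rdiv_le_0_compat; lra).
  unfold b; lra. }
pose proof (is_derive_ge_growth G _ m a b Hb
  (fun x Hx => HG x (proj1 Hx))
  (fun x Hx => Hrate x (Rgt_not_eq _ _ (Hpos x (proj1 Hx))))) as Hgrowth.
assert (0 < / h b) by (apply Rinv_0_lt_compat, Hpos, Hb).
assert (m * (b - a) = S + / h a + m) by (unfold b; field; lra).
specialize (HQS a b Hb); unfold G in Hgrowth; lra.
Qed.

Lemma riccati_supersolution_eq0 (h dh Q g : R -> R) (k S : R) :
  0 < k ->
  (forall t, is_derive h t (dh t)) -> (forall t, 0 <= dh t) ->
  (forall t, is_derive Q t (g t)) -> (forall t, 0 <= g t) ->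
  (forall a b, a <= b -> Q b - Q a <= S) ->
  (forall t, k * h t ^ 2 <= g t * dh t) ->
  forall a, h a = 0.
Proof.
intros Hk Hh Hdh HQ Hg HQS Hric a.
apply Rle_antisym.
- exact (riccati_supersolution_nonpos h dh Q g k S Hk Hh Hdh HQ Hg HQS Hric a).
- rewrite <- (Ropp_involutive a).
  enough (- h (- - a) <= 0) by lra.
  apply (riccati_supersolution_nonpos (fun t => - h (- t)) (fun t => dh (- t))
           (fun t => - Q (- t)) (fun t => g (- t)) k S Hk).
  + intros t; apply is_derive_reflect, Hh.
  + intros t; apply Hdh.
  + intros t; apply is_derive_reflect, HQ.
  + intros t; apply Hg.
  + intros u v Huv; specialize (HQS (- v) (- u)); lra.
  + intros t; specialize (Hric (- t)); lra.
Qed.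

Lemma sqr_dot_le (a b x y : R) : (a * x + b * y) ^ 2 <= (a ^ 2 + b ^ 2) * (x ^ 2 + y ^ 2).
Proof.
replace ((a ^ 2 + b ^ 2) * (x ^ 2 + y ^ 2)) with ((a * x + b * y) ^ 2 + (a * y - b * x) ^ 2)
  by ring.
pose proof (pow2_ge_0 (a * y - b * x)); lra.
Qed.

Section SchrodingerL2.

Variables (V V' V'' : R -> C) (F F' f : R -> R) (Lam : C).
Hypotheses (HV' : forall t, is_derive V t (V' t))
  (HV'' : forall t, is_derive V' t (V'' t))
  (HF : forall t, is_derive F t (F' t))
  (Heq : forall t, V'' t = (RtoC (F t ^ 2 - F' t) * V t
                            + Lam * (Lam - RtoC (f t)) * V t)%C)
  (Hf : forall t, f t <= 0)
  (HLam : 0 < Re Lam).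

Let v1 t := Re (V t).
Let v2 t := Im (V t).
Let p1 t := Re (V' t).
Let p2 t := Im (V' t).
Let w1 t := p1 t + F t * v1 t.
Let w2 t := p2 t + F t * v2 t.
Let mass t := v1 t ^ 2 + v2 t ^ 2.
Let Lam_sq := Re Lam ^ 2 + Im Lam ^ 2.
Let h t := Re Lam * (v1 t * w1 t + v2 t * w2 t) + Im Lam * (v1 t * w2 t - v2 t * w1 t).
Let dh t := Re Lam * (w1 t ^ 2 + w2 t ^ 2) + Lam_sq * (Re Lam - f t) * mass t.

Lemma Lam_sq_pos : 0 < Lam_sq.
Proof. pose proof (pow2_gt_0 (Re Lam)); pose proof (pow2_ge_0 (Im Lam)); unfold Lam_sq; lra. Qed.

Lemma mass_ge0 t : 0 <= mass t.
Proof. pose proof (pow2_ge_0 (v1 t)); pose proof (pow2_ge_0 (v2 t)); unfold mass; lra. Qed.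

Lemma Re_second_derivative t : Re (V'' t) =
  (F t ^ 2 - F' t + Re Lam * (Re Lam - f t) - Im Lam ^ 2) * v1 t
  - Im Lam * (2 * Re Lam - f t) * v2 t.
Proof. rewrite Heq; unfold v1, v2, Re, Im; simpl; ring. Qed.

Lemma Im_second_derivative t : Im (V'' t) =
  (F t ^ 2 - F' t + Re Lam * (Re Lam - f t) - Im Lam ^ 2) * v2 t
  + Im Lam * (2 * Re Lam - f t) * v1 t.
Proof. rewrite Heq; unfold v1, v2, Re, Im; simpl; ring. Qed.

Lemma v1_derive t : is_derive v1 t (p1 t).
Proof. exact (is_derive_Re V t _ (HV' t)). Qed.

Lemma v2_derive t : is_derive v2 t (p2 t).
Proof. exact (is_derive_Im V t _ (HV' t)). Qed.

Lemma p1_derive t : is_derive p1 t (Re (V'' t)).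
Proof. exact (is_derive_Re V' t _ (HV'' t)). Qed.

Lemma p2_derive t : is_derive p2 t (Im (V'' t)).
Proof. exact (is_derive_Im V' t _ (HV'' t)). Qed.

Lemma flux_derive t : is_derive h t (dh t).
Proof.
assert (E1 : Derive (fun x => v1 x) t = p1 t) by apply is_derive_unique, v1_derive.
assert (E2 : Derive (fun x => v2 x) t = p2 t) by apply is_derive_unique, v2_derive.
assert (E3 : Derive (fun x => p1 x) t = Re (V'' t)) by apply is_derive_unique, p1_derive.
assert (E4 : Derive (fun x => p2 x) t = Im (V'' t)) by apply is_derive_unique, p2_derive.
assert (E5 : Derive (fun x => F x) t = F' t) by apply is_derive_unique, HF.
unfold h, w1, w2; auto_derive.
- repeat split; eexists;
    first [exact (v1_derive t) | exact (v2_derive t) | exact (p1_derive t)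
          | exact (p2_derive t) | exact (HF t)].
- rewrite E1, E2, E3, E4, E5, Re_second_derivative, Im_second_derivative.
  unfold dh, w1, w2, mass, Lam_sq; ring.
Qed.

Lemma flux_derive_ge t : Re Lam * (w1 t ^ 2 + w2 t ^ 2) + Re Lam * Lam_sq * mass t <= dh t.
Proof.
pose proof (Hf t); pose proof Lam_sq_pos; pose proof (mass_ge0 t).
assert (0 <= Lam_sq * mass t) by (apply Rmult_le_pos; lra).
unfold dh; nra.
Qed.

Lemma flux_derive_ge0 t : 0 <= dh t.
Proof.
pose proof (flux_derive_ge t); pose proof Lam_sq_pos; pose proof (mass_ge0 t).
pose proof (pow2_ge_0 (w1 t)); pose proof (pow2_ge_0 (w2 t)).
assert (0 <= Re Lam * Lam_sq * mass t) by (apply Rmult_le_pos; [apply Rmult_le_pos|]; lra).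
nra.
Qed.

Lemma flux_sqr_le t : Re Lam / Lam_sq * h t ^ 2 <= mass t * dh t.
Proof.
pose proof Lam_sq_pos; pose proof (mass_ge0 t); pose proof (flux_derive_ge t).
assert (HCS : h t ^ 2 <= Lam_sq * (mass t * (w1 t ^ 2 + w2 t ^ 2))).
{ replace (mass t * (w1 t ^ 2 + w2 t ^ 2))
    with ((v1 t * w1 t + v2 t * w2 t) ^ 2 + (v1 t * w2 t - v2 t * w1 t) ^ 2)
    by (unfold mass; ring).
  apply sqr_dot_le. }
apply (Rmult_le_reg_l Lam_sq); [lra|].
replace (Lam_sq * (Re Lam / Lam_sq * h t ^ 2)) with (Re Lam * h t ^ 2) by (field; lra).
assert (HLm : 0 <= Lam_sq * mass t) by (apply Rmult_le_pos; lra).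
assert (Hw : Re Lam * (w1 t ^ 2 + w2 t ^ 2) <= dh t).
{ assert (0 <= Re Lam * Lam_sq * mass t) by (rewrite Rmult_assoc; apply Rmult_le_pos; lra).
  lra. }
apply Rle_trans with (Lam_sq * mass t * (Re Lam * (w1 t ^ 2 + w2 t ^ 2))).
- replace (Lam_sq * mass t * (Re Lam * (w1 t ^ 2 + w2 t ^ 2)))
    with (Re Lam * (Lam_sq * (mass t * (w1 t ^ 2 + w2 t ^ 2)))) by ring.
  apply Rmult_le_compat_l; lra.
- rewrite <- (Rmult_assoc Lam_sq (mass t) (dh t)); apply Rmult_le_compat_l; lra.
Qed.

Lemma mass_continuous t : continuous mass t.
Proof.
apply (ex_derive_continuous mass); unfold mass; auto_derive.
repeat split; eexists; first [exact (v1_derive t) | exact (v2_derive t)].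
Qed.

Lemma mass_ex_RInt a b : ex_RInt mass a b.
Proof.
apply (@ex_RInt_continuous R_CompleteNormedModule); intros; apply mass_continuous.
Qed.

Lemma mass_primitive t : is_derive (fun u => RInt mass 0 u) t (mass t).
Proof.
apply is_derive_RInt with (a := 0); [|apply mass_continuous].
exists (mkposreal 1 Rlt_0_1); intros u _.
apply (@RInt_correct R_CompleteNormedModule), mass_ex_RInt.
Qed.

Lemma mass_bounded : L2R V -> exists S, forall a b, a <= b -> RInt mass a b <= S.
Proof.
intros HL2.
assert (Hmass : forall t, Cmod (V t) ^ 2 = mass t) by (intros t; apply Cmod2_alt).
apply RInt_bounded_of_ex_RInt_gen.
- exact mass_ge0.
- exact mass_ex_RInt.
- exact (ex_RInt_gen_ext_eq _ _ Hmass HL2).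
Qed.

Lemma flux_eq0 : L2R V -> forall t, h t = 0.
Proof.
intros HL2; destruct (mass_bounded HL2) as [S HS].
apply (riccati_supersolution_eq0 h dh (fun u => RInt mass 0 u) mass (Re Lam / Lam_sq) S).
- apply Rdiv_lt_0_compat; [exact HLam | exact Lam_sq_pos].
- exact flux_derive.
- exact flux_derive_ge0.
- exact mass_primitive.
- exact mass_ge0.
- intros a b Hab; rewrite <- (RInt_Chasles mass 0 a b) by apply mass_ex_RInt.
  unfold plus; simpl; specialize (HS a b Hab); lra.
- exact flux_sqr_le.
Qed.

Theorem L2_solution_eq0 : L2R V -> forall t, V t = RtoC 0.
Proof.
intros HL2 t.
assert (Hdh : dh t = 0).
{ rewrite <- (is_derive_unique h t _ (flux_derive t)).
  apply is_derive_unique, (is_derive_ext (fun _ => 0)); [intros u; symmetry; apply flux_eq0, HL2|].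
  exact (is_derive_const (V := R_NormedModule) 0 t). }
assert (Hmass : mass t <= 0).
{ pose proof (flux_derive_ge t) as Hge; rewrite Hdh in Hge.
  pose proof (pow2_ge_0 (w1 t)); pose proof (pow2_ge_0 (w2 t)).
  assert (0 < Re Lam * Lam_sq) by (apply Rmult_lt_0_compat; [exact HLam | exact Lam_sq_pos]).
  nra. }
unfold mass, v1, v2, Re, Im in Hmass.
pose proof (pow2_ge_0 (fst (V t))); pose proof (pow2_ge_0 (snd (V t))).
apply injective_projections; simpl; nra.
Qed.

End SchrodingerL2.

Lemma ffun_nonpos (N r0 : R -> R) (c X : R) :
  0 <= c -> (forall s, 0 < s -> Derive N s < 0) -> ffun N r0 c X <= 0.
Proof.
intros Hc HN; unfold ffun, Np.
destruct (Rle_lt_or_eq_dec _ _ (pow2_ge_0 (r0 X))) as [Hpos | Hzero].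
- assert (Derive N (r0 X ^ 2) * r0 X ^ 2 < 0) by (specialize (HN _ Hpos); nra).
  nra.
- rewrite <- Hzero; lra.
Qed.

Lemma Ffun_is_derive (N r0 : R -> R) (X : R) :
  (forall n s, ex_derive_n N n s) -> (forall t, ex_derive r0 t) ->
  is_derive (Ffun N r0) X (Derive (Ffun N r0) X).
Proof.
intros HN Hr0; apply Derive_correct; unfold Ffun, Defs.N0, Np.
auto_derive; repeat split; first [apply (HN 1%nat) | apply (HN 2%nat) | apply Hr0].
Qed.

Theorem lemma8p9 (N r0 : R -> R) (c : R) (Lam : C) (V V' V'' : R -> C)
  (HN : admissible_nonlinearity N)
  (HN2 : forall s : R, 0 <= s <= 1 -> Derive_n N 2 s <= 0)
  (Hc : 0 <= c < 1)
  (HLam : 0 < Re Lam)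
  (Hr0 : forall X : R, is_derive r0 X (r0 X * N (r0 X ^ 2)))
  (Hr00 : r0 0 = 1 / 2)
  (HV' : forall X : R, is_derive V X (V' X))
  (HV'' : forall X : R, is_derive V' X (V'' X))
  (Heq : forall X : R,
     V'' X = (RtoC (Ffun N r0 X ^ 2 - Derive (Ffun N r0) X) * V X
              + Lam * (Lam - RtoC (ffun N r0 c X)) * V X)%C)
  (HL2 : L2R V) :
  forall X : R, V X = RtoC 0.
Proof.
destruct HN as [HNsmooth [HNdecr _]].
apply (L2_solution_eq0 V V' V'' (Ffun N r0) (Derive (Ffun N r0)) (ffun N r0 c) Lam);
  try assumption.
- intros X; apply Ffun_is_derive; [exact HNsmooth | intros t; eexists; apply Hr0].
- intros X; apply ffun_nonpos; [apply Hc | exact HNdecr].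
Qed.
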